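(* Let $X$ be a Hilbert space, $\widehat\beta:X\to[0,+\infty)$ convex and lower semicontinuous (hence continuous), $\beta=\partial\widehat\beta$, and for $u\in X$ let $\beta^0(u)$ be the element of $\beta(u)$ of minimal norm. Let $\Psi:[0,+\infty)\to[0,+\infty)$ be continuous. If $\|\beta^0(u)\|_X\le\Psi(\widehat\beta(u))$ for every $u\in X$, then $\|\zeta\|_X\le\Psi(\widehat\beta(u))$ for all $u\in X$ and all $\zeta\in\beta(u)$. *)

From Stdlib Require Import Reals.
Open Scope R_scope.

Record HilbertSpace := {
  hcarrier :> Type;
  hzero : hcarrier;
  hadd : hcarrier -> hcarrier -> hcarrier;
  hopp : hcarrier -> hcarrier;
  hscal : R -> hcarrier -> hcarrier;
  hinner : hcarrier -> hcarrier -> R;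
  hadd_assoc : forall x y z, hadd x (hadd y z) = hadd (hadd x y) z;
  hadd_comm : forall x y, hadd x y = hadd y x;
  hadd_zero : forall x, hadd x hzero = x;
  hadd_opp : forall x, hadd x (hopp x) = hzero;
  hscal_assoc : forall a b x, hscal a (hscal b x) = hscal (a * b) x;
  hscal_one : forall x, hscal 1 x = x;
  hscal_distr_l : forall a x y, hscal a (hadd x y) = hadd (hscal a x) (hscal a y);
  hscal_distr_r : forall a b x, hscal (a + b) x = hadd (hscal a x) (hscal b x);
  hinner_sym : forall x y, hinner x y = hinner y x;
  hinner_add_l : forall x y z, hinner (hadd x y) z = hinner x z + hinner y z;
  hinner_scal_l : forall a x y, hinner (hscal a x) y = a * hinner x y;
  hinner_pos : forall x, 0 <= hinner x x;
  hinner_def : forall x, hinner x x = 0 -> x = hzero;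
  hcomplete : forall u : nat -> hcarrier,
    (forall eps, eps > 0 -> exists N, forall n m, (n >= N)%nat -> (m >= N)%nat ->
        sqrt (hinner (hadd (u n) (hopp (u m))) (hadd (u n) (hopp (u m)))) < eps) ->
    exists l, forall eps, eps > 0 -> exists N, forall n, (n >= N)%nat ->
        sqrt (hinner (hadd (u n) (hopp l)) (hadd (u n) (hopp l))) < eps
}.

Arguments hzero {h}.
Arguments hadd {h}.
Arguments hopp {h}.
Arguments hscal {h}.
Arguments hinner {h}.

Definition hsub {X : HilbertSpace} (x y : X) : X := hadd x (hopp y).
Definition hnorm {X : HilbertSpace} (x : X) : R := sqrt (hinner x x).

Definition convex_fun {X : HilbertSpace} (f : X -> R) : Prop :=
  forall (x y : X) (t : R), 0 <= t <= 1 ->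
    f (hadd (hscal t x) (hscal (1 - t) y)) <= t * f x + (1 - t) * f y.

Definition lsc_fun {X : HilbertSpace} (f : X -> R) : Prop :=
  forall (x : X) (eps : R), eps > 0 -> exists delta, delta > 0 /\
    forall y : X, hnorm (hsub y x) < delta -> f x - eps < f y.

Definition subdiff {X : HilbertSpace} (f : X -> R) (u zeta : X) : Prop :=
  forall v : X, f u + hinner zeta (hsub v u) <= f v.

Definition min_norm_subgrad {X : HilbertSpace} (f : X -> R) (u zeta0 : X) : Prop :=
  subdiff f u zeta0 /\ forall zeta, subdiff f u zeta -> hnorm zeta0 <= hnorm zeta.

Definition continuous_on_nonneg (Psi : R -> R) : Prop :=
  forall t, 0 <= t -> forall eps, eps > 0 -> exists delta, delta > 0 /\
    forall s, 0 <= s -> Rabs (s - t) < delta -> Rabs (Psi s - Psi t) < eps.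

(* Let zeta be a subgradient of f at u and t > 0 small. The proximal point x of
   w = u + t zeta for the parameter t^3 (i.e. the minimizer of
   f y + |y - w|^2 / (2 t^3), which exists by uniform convexity and completeness)
   carries the subgradient (w - x) / t^3, hence a subgradient of minimal norm z0.
   Comparing the proximal inequality with the subgradient inequality at u gives
   |x - w| = O(t^2) and f x = f u + O(t). Then x - u = t zeta + O(t^2), and
   monotonicity of the subdifferential, <z0 - zeta, x - u> >= 0, yields
   |zeta| <= |z0| + O(t). Hence |zeta| <= |z0| + O(t) <= Psi (f x) + O(t), and
   continuity of Psi at f u concludes as t -> 0. *)

From Stdlib Require Import Reals Lra Lia Psatz Classical IndefiniteDescription.
Open Scope R_scope.

Section InnerProduct.
Context {X : HilbertSpace}.

Definition hsqnorm (x : X) : R := hinner x x.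
Definition hmid (a b : X) : X := hadd (hscal (/2) a) (hscal (1 - /2) b).

Lemma hinner_add_r (x y z : X) : hinner x (hadd y z) = hinner x y + hinner x z.
Proof. rewrite !(hinner_sym X x). apply hinner_add_l. Qed.

Lemma hinner_scal_r a (x y : X) : hinner x (hscal a y) = a * hinner x y.
Proof. rewrite !(hinner_sym X x). apply hinner_scal_l. Qed.

Lemma hinner_zero_l (y : X) : hinner hzero y = 0.
Proof. pose proof (hinner_add_l X hzero hzero y) as H. rewrite hadd_zero in H. lra. Qed.

Lemma hinner_opp_l (x y : X) : hinner (hopp x) y = - hinner x y.
Proof.
  pose proof (hinner_add_l X x (hopp x) y) as H.
  rewrite hadd_opp, hinner_zero_l in H. lra.
Qed.

Lemma hinner_opp_r (x y : X) : hinner x (hopp y) = - hinner x y.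
Proof. rewrite !(hinner_sym X x). apply hinner_opp_l. Qed.

Lemma hsub_zero_r (x : X) : hsub x hzero = x.
Proof.
  assert (Hopp : hopp (@hzero X) = hzero).
  { rewrite <- (hadd_zero X (hopp hzero)), hadd_comm. apply hadd_opp. }
  unfold hsub. rewrite Hopp. apply hadd_zero.
Qed.

Lemma hsqnorm_nonneg (x : X) : 0 <= hsqnorm x.
Proof. apply hinner_pos. Qed.

Lemma hnorm_nonneg (x : X) : 0 <= hnorm x.
Proof. apply sqrt_pos. Qed.

Lemma hnorm_sq (x : X) : hnorm x * hnorm x = hsqnorm x.
Proof. apply sqrt_sqrt, hinner_pos. Qed.

End InnerProduct.

Ltac inner_expand := unfold hsub, hsqnorm, hmid in *;
  repeat first [ rewrite hinner_add_l in * | rewrite hinner_add_r in *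
               | rewrite hinner_opp_l in * | rewrite hinner_opp_r in *
               | rewrite hinner_scal_l in * | rewrite hinner_scal_r in * ].

Section InnerProductInequalities.
Context {X : HilbertSpace}.

Lemma hinner_sq_le (x y : X) : hinner x y * hinner x y <= hsqnorm x * hsqnorm y.
Proof.
  destruct (Req_dec (hsqnorm y) 0) as [Hy0 | Hy0].
  - apply hinner_def in Hy0. subst y.
    rewrite (hinner_sym X x), hinner_zero_l. unfold hsqnorm. rewrite hinner_zero_l. lra.
  - assert (Hy : 0 < hsqnorm y) by (pose proof (hsqnorm_nonneg y); lra).
    (* |x + s y|^2 >= 0 at the minimizing s = - <x, y> / |y|^2 *)
    pose proof (hinner_pos X (hadd x (hscal (- hinner x y / hsqnorm y) y))) as Hp.
    inner_expand. rewrite (hinner_sym X y x) in Hp.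
    replace (hinner x x + - hinner x y / hinner y y * hinner x y
             + (- hinner x y / hinner y y * hinner x y
                + - hinner x y / hinner y y * (- hinner x y / hinner y y * hinner y y)))
      with (hinner x x - hinner x y * hinner x y / hinner y y) in Hp by (field; lra).
    apply (Rmult_le_reg_r (/ hinner y y)); [apply Rinv_0_lt_compat; lra |].
    replace (hinner x x * hinner y y * / hinner y y) with (hinner x x) by (field; lra).
    unfold Rdiv in Hp. lra.
Qed.

Lemma Rabs_hinner_le (x y : X) : Rabs (hinner x y) <= hnorm x * hnorm y.
Proof.
  pose proof (hinner_sq_le x y). pose proof (hnorm_sq x). pose proof (hnorm_sq y).
  pose proof (hnorm_nonneg x). pose proof (hnorm_nonneg y).
  rewrite <- (Rabs_right (hnorm x * hnorm y)) by nra.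
  apply Rsqr_le_abs_0. unfold Rsqr. nra.
Qed.

Lemma hinner_le_hnorm (x y : X) : hinner x y <= hnorm x * hnorm y.
Proof. pose proof (Rabs_hinner_le x y). pose proof (Rle_abs (hinner x y)). lra. Qed.

Lemma hinner_ge_hnorm (x y : X) : - (hnorm x * hnorm y) <= hinner x y.
Proof.
  pose proof (Rabs_hinner_le x y). pose proof (Rle_abs (- hinner x y)).
  rewrite Rabs_Ropp in *. lra.
Qed.

Lemma hsqnorm_mid_sub (a b w : X) :
  hsqnorm (hsub (hmid a b) w)
  = (hsqnorm (hsub a w) + hsqnorm (hsub b w)) / 2 - hsqnorm (hsub a b) / 4.
Proof.
  inner_expand. rewrite (hinner_sym X b a), (hinner_sym X w a), (hinner_sym X w b). field.
Qed.

Lemma hsqnorm_sub_split (x y w : X) :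
  hsqnorm (hsub y w)
  = hsqnorm (hsub y x) + 2 * hinner (hsub y x) (hsub x w) + hsqnorm (hsub x w).
Proof.
  inner_expand. rewrite (hinner_sym X x y), (hinner_sym X w y), (hinner_sym X w x). ring.
Qed.

End InnerProductInequalities.

Definition eventually (P : nat -> Prop) : Prop :=
  exists N, forall n, (N <= n)%nat -> P n.

Lemma eventually_and (P Q : nat -> Prop) :
  eventually P -> eventually Q -> eventually (fun n => P n /\ Q n).
Proof.
  intros [N1 H1] [N2 H2]. exists (max N1 N2). intros n Hn. split; [apply H1 | apply H2]; lia.
Qed.

Lemma eventually_witness (P : nat -> Prop) : eventually P -> exists n, P n.
Proof. intros [N HN]. exists N. apply HN. lia. Qed.

Lemma inv_INR_S_pos (n : nat) : 0 < / INR (S n).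
Proof. apply Rinv_0_lt_compat, lt_0_INR. lia. Qed.

Lemma inv_INR_S_le (n N : nat) : (N <= n)%nat -> / INR (S n) <= / INR (S N).
Proof. intros. apply Rinv_le_contravar; [apply lt_0_INR; lia | apply le_INR; lia]. Qed.

Lemma inv_INR_S_le_1 (n : nat) : / INR (S n) <= 1.
Proof. rewrite <- Rinv_1. change 1 with (INR (S 0)). apply inv_INR_S_le. lia. Qed.

Lemma eventually_inv_INR_S_lt (e : R) : 0 < e -> eventually (fun n => / INR (S n) < e).
Proof.
  intros he. destruct (INR_unbounded (/ e)) as [N HN]. exists N. intros n Hn.
  apply (Rle_lt_trans _ (/ INR (S N))); [now apply inv_INR_S_le |].
  rewrite <- (Rinv_inv e). apply Rinv_lt_contravar.
  - apply Rmult_lt_0_compat; [apply Rinv_0_lt_compat; lra | apply lt_0_INR; lia].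
  - rewrite S_INR. lra.
Qed.

Lemma Rle_of_forall_lt_plus (a b : R) : (forall e, 0 < e -> a < b + e) -> a <= b.
Proof. intros H. apply Rnot_lt_le. intros Hba. specialize (H (a - b)). lra. Qed.

Section Convergence.
Context {X : HilbertSpace}.

Definition hconverges (v : nat -> X) (l : X) : Prop :=
  forall e, 0 < e -> eventually (fun n => hnorm (hsub (v n) l) < e).

Definition seq_closed_lsc (P : X -> Prop) (G : X -> R) : Prop :=
  forall v x, (forall n, P (v n)) -> hconverges v x ->
    P x /\ forall e, 0 < e -> eventually (fun n => G x < G (v n) + e).

Lemma lsc_fun_eventually (f : X -> R) v x : lsc_fun f -> hconverges v x ->
  forall e, 0 < e -> eventually (fun n => f x < f (v n) + e).
Proof.
  intros Hf Hv e he. destruct (Hf x e he) as [d [hd Hd]].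
  destruct (Hv d hd) as [N HN]. exists N. intros n Hn.
  specialize (Hd (v n) (HN n Hn)). lra.
Qed.

Lemma hsqnorm_sub_eventually (v : nat -> X) x w : hconverges v x ->
  forall e, 0 < e -> eventually (fun n => hsqnorm (hsub x w) < hsqnorm (hsub (v n) w) + e).
Proof.
  intros Hv e he. set (r := hnorm (hsub x w)).
  assert (hr : 0 <= r) by apply hnorm_nonneg.
  destruct (Hv (e / (2 * r + 1))) as [N HN]; [apply Rdiv_lt_0_compat; lra |].
  exists N. intros n Hn. specialize (HN n Hn).
  pose proof (hsqnorm_sub_split x (v n) w) as Hsplit.
  pose proof (hinner_ge_hnorm (hsub (v n) x) (hsub x w)) as Hcs.
  pose proof (hsqnorm_nonneg (hsub (v n) x)).
  pose proof (hnorm_nonneg (hsub (v n) x)).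
  apply (Rmult_lt_compat_r (2 * r + 1)) in HN; [| lra].
  replace (e / (2 * r + 1) * (2 * r + 1)) with e in HN by (field; lra).
  fold r in Hcs. nra.
Qed.

Lemma subdiff_closed (f : X -> R) u (v : nat -> X) z :
  (forall n, subdiff f u (v n)) -> hconverges v z -> subdiff f u z.
Proof.
  intros Hv Hc p. apply Rle_of_forall_lt_plus. intros e he.
  set (h := hsub p u). set (r := hnorm h).
  assert (hr : 0 <= r) by apply hnorm_nonneg.
  destruct (eventually_witness _ (Hc (e / (r + 1)) ltac:(apply Rdiv_lt_0_compat; lra)))
    as [n Hn].
  specialize (Hv n p). fold h in Hv |- *.
  assert (E : hinner z h = hinner (v n) h - hinner (hsub (v n) z) h).
  { unfold hsub. rewrite hinner_add_l, hinner_opp_l. ring. }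
  pose proof (hinner_ge_hnorm (hsub (v n) z) h) as Hcs. fold r in Hcs.
  pose proof (hnorm_nonneg (hsub (v n) z)).
  apply (Rmult_lt_compat_r (r + 1)) in Hn; [| lra].
  replace (e / (r + 1) * (r + 1)) with e in Hn by (field; lra).
  nra.
Qed.

End Convergence.

Lemma minimizing_sequence {A : Type} (P : A -> Prop) (G : A -> R) (lb : R) :
  (exists y, P y) -> (forall y, P y -> lb <= G y) ->
  exists m (v : nat -> A), (forall y, P y -> m <= G y) /\
    forall n, P (v n) /\ G (v n) <= m + / INR (S n).
Proof.
  intros [y0 Py0] Hlb.
  set (E := fun r => exists y, P y /\ r = - G y).
  destruct (completeness E) as [L [HL1 HL2]].
  - exists (- lb). intros r [y [Py ->]]. specialize (Hlb y Py). lra.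
  - exists (- G y0). now exists y0.
  - exists (- L).
    assert (Hm : forall y, P y -> - L <= G y).
    { intros y Py. assert (E (- G y)) as Ey by now exists y. specialize (HL1 _ Ey). lra. }
    destruct (functional_choice (fun n y => P y /\ G y <= - L + / INR (S n))) as [v Hv].
    + intros n. apply NNPP. intros Hnone. pose proof (inv_INR_S_pos n).
      assert (L <= L - / INR (S n)); [| lra].
      apply HL2. intros r [y [Py ->]].
      apply Rnot_lt_le. intros Hlt. apply Hnone. exists y. split; [assumption | lra].
    + exists v. now split.
Qed.

Section Minimization.
Context {X : HilbertSpace} (P : X -> Prop) (G : X -> R) (c : R).
Hypothesis c_pos : 0 < c.
Hypothesis mid_closed : forall a b, P a -> P b -> P (hmid a b).
Hypothesis mid_uniformly_convex : forall a b, P a -> P b ->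
  G (hmid a b) <= (G a + G b) / 2 - c * hsqnorm (hsub a b).

Lemma minimizing_sequence_cauchy (m : R) (v : nat -> X) :
  (forall y, P y -> m <= G y) -> (forall n, P (v n) /\ G (v n) <= m + / INR (S n)) ->
  forall e, e > 0 -> exists N, forall n k, (n >= N)%nat -> (k >= N)%nat ->
    hnorm (hsub (v n) (v k)) < e.
Proof.
  intros Hm Hv e he.
  assert (Hce : 0 < c * (e * e)) by (apply Rmult_lt_0_compat; nra).
  destruct (eventually_witness _ (eventually_inv_INR_S_lt _ Hce)) as [N HN].
  exists N. intros n k Hn Hk.
  destruct (Hv n) as [Pn Gn], (Hv k) as [Pk Gk].
  pose proof (Hm _ (mid_closed _ _ Pn Pk)).
  pose proof (mid_uniformly_convex _ _ Pn Pk).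
  pose proof (inv_INR_S_le n N Hn). pose proof (inv_INR_S_le k N Hk).
  assert (Hsq : hsqnorm (hsub (v n) (v k)) < e * e).
  { apply (Rmult_lt_reg_l c); lra. }
  pose proof (hnorm_sq (hsub (v n) (v k))). pose proof (hnorm_nonneg (hsub (v n) (v k))).
  nra.
Qed.

Lemma uniformly_convex_min_exists (lb : R) :
  (exists y, P y) -> (forall y, P y -> lb <= G y) -> seq_closed_lsc P G ->
  exists x, P x /\ forall y, P y -> G x <= G y.
Proof.
  intros Hne Hlb Hlsc.
  destruct (minimizing_sequence P G lb Hne Hlb) as [m [v [Hm Hv]]].
  destruct (hcomplete X v (minimizing_sequence_cauchy m v Hm Hv)) as [x Hx].
  destruct (Hlsc v x) as [Px Gx]; [intro n; apply Hv | exact Hx |].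
  exists x. split; [exact Px |]. intros y Py.
  apply (Rle_trans _ m); [| now apply Hm].
  apply Rle_of_forall_lt_plus. intros e he.
  destruct (eventually_witness _ (eventually_and _ _ (Gx (e / 2) ltac:(lra))
              (eventually_inv_INR_S_lt (e / 2) ltac:(lra)))) as [n [H1 H2]].
  pose proof (proj2 (Hv n)). lra.
Qed.

End Minimization.

Lemma nonneg_of_small_perturbations (A B : R) :
  (forall s, 0 < s <= 1 -> 0 <= A + s * B) -> 0 <= A.
Proof.
  intros H. apply Rnot_lt_le. intros HA.
  assert (He : 0 < - A / (Rabs B + 1)) by (apply Rdiv_lt_0_compat; pose proof (Rabs_pos B); lra).
  destruct (eventually_witness _ (eventually_inv_INR_S_lt _ He)) as [n Hn].
  set (s := / INR (S n)) in Hn.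
  assert (Hs : 0 < s <= 1) by (split; [apply inv_INR_S_pos | apply inv_INR_S_le_1]).
  clearbody s. specialize (H s Hs).
  pose proof (Rabs_pos B). pose proof (Rle_abs B).
  apply (Rmult_lt_compat_r (Rabs B + 1)) in Hn; [| lra].
  replace (- A / (Rabs B + 1) * (Rabs B + 1)) with (- A) in Hn by (field; lra).
  assert (s * B <= s * Rabs B) by (apply Rmult_le_compat_l; lra).
  lra.
Qed.

Section Subdifferential.
Context {X : HilbertSpace} (f : X -> R).

Lemma subdiff_monotone u x (zeta eta : X) :
  subdiff f u zeta -> subdiff f x eta -> hinner zeta (hsub x u) <= hinner eta (hsub x u).
Proof.
  intros Hu Hx. specialize (Hu x). specialize (Hx u).
  assert (E : hinner eta (hsub u x) = - hinner eta (hsub x u)) by (inner_expand; ring).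
  lra.
Qed.

Lemma subdiff_mid_closed u (a b : X) :
  subdiff f u a -> subdiff f u b -> subdiff f u (hmid a b).
Proof.
  intros Ha Hb p. specialize (Ha p). specialize (Hb p).
  unfold hmid. rewrite hinner_add_l, !hinner_scal_l. lra.
Qed.

Lemma min_norm_subgrad_exists u (xi : X) :
  subdiff f u xi -> exists z, min_norm_subgrad f u z.
Proof.
  intros Hxi.
  destruct (uniformly_convex_min_exists (subdiff f u) hsqnorm (/ 4)) with (lb := 0) as [z [Pz Hz]].
  - lra.
  - apply subdiff_mid_closed.
  - intros a b _ _. pose proof (hsqnorm_mid_sub a b hzero) as Hpar.
    rewrite !hsub_zero_r in Hpar. lra.
  - now exists xi.
  - intros y _. apply hsqnorm_nonneg.
  - intros v x Pv Hc. split; [exact (subdiff_closed f u v x Pv Hc) |].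
    intros e he. destruct (hsqnorm_sub_eventually v x hzero Hc e he) as [N HN].
    exists N. intros n Hn. specialize (HN n Hn). now rewrite !hsub_zero_r in HN.
  - exists z. split; [exact Pz |]. intros zeta Hzeta. apply sqrt_le_1_alt, Hz, Hzeta.
Qed.

Definition prox_point (k : R) (w x : X) : Prop :=
  forall y, f x + k * hsqnorm (hsub x w) <= f y + k * hsqnorm (hsub y w).

Hypothesis f_convex : convex_fun f.

Lemma prox_point_exists (lb k : R) (w : X) :
  0 < k -> (forall y, lb <= f y) -> lsc_fun f -> exists x, prox_point k w x.
Proof.
  intros hk Hlb Hlsc.
  destruct (uniformly_convex_min_exists (fun _ => True)
              (fun y => f y + k * hsqnorm (hsub y w)) (k / 4)) with (lb := lb) as [x [_ Hx]].
  - lra.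
  - easy.
  - intros a b _ _. rewrite hsqnorm_mid_sub.
    assert (f (hmid a b) <= / 2 * f a + (1 - / 2) * f b) by (apply f_convex; lra).
    lra.
  - now exists w.
  - intros y _. pose proof (Hlb y). pose proof (hsqnorm_nonneg (hsub y w)). nra.
  - intros v x _ Hc. split; [easy |]. intros e he.
    assert (hek : 0 < e / (2 * k)) by (apply Rdiv_lt_0_compat; lra).
    destruct (eventually_and _ _ (lsc_fun_eventually f v x Hlsc Hc (e / 2) ltac:(lra))
                (hsqnorm_sub_eventually v x w Hc _ hek)) as [N HN].
    exists N. intros n Hn. destruct (HN n Hn) as [H1 H2].
    apply (Rmult_lt_compat_l k) in H2; [| exact hk].
    replace (k * (hsqnorm (hsub (v n) w) + e / (2 * k)))
      with (k * hsqnorm (hsub (v n) w) + e / 2) in H2 by (field; lra).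
    lra.
  - exists x. intro y. now apply Hx.
Qed.

Lemma prox_point_subdiff (k : R) (w x : X) :
  0 < k -> prox_point k w x -> subdiff f x (hscal (2 * k) (hsub w x)).
Proof.
  intros hk Hx y.
  assert (E : hinner (hscal (2 * k) (hsub w x)) (hsub y x)
              = - (2 * k) * hinner (hsub y x) (hsub x w)).
  { inner_expand. rewrite (hinner_sym X w y), (hinner_sym X x y), (hinner_sym X w x). ring. }
  rewrite E.
  enough (0 <= f y - f x + 2 * k * hinner (hsub y x) (hsub x w)) by lra.
  apply (nonneg_of_small_perturbations _ (k * hsqnorm (hsub y x))).
  intros s hs.
  (* first variation of the proximal objective along the segment from [x] to [y] *)
  specialize (Hx (hadd (hscal s y) (hscal (1 - s) x))).
  assert (Hconv : f (hadd (hscal s y) (hscal (1 - s) x)) <= s * f y + (1 - s) * f x)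
    by (apply f_convex; lra).
  assert (Es : hsqnorm (hsub (hadd (hscal s y) (hscal (1 - s) x)) w)
               = hsqnorm (hsub x w) + 2 * s * hinner (hsub y x) (hsub x w)
                 + s * s * hsqnorm (hsub y x)).
  { inner_expand. rewrite (hinner_sym X x y), (hinner_sym X w y), (hinner_sym X w x). ring. }
  rewrite Es in Hx.
  apply (Rmult_le_reg_l s); [lra |]. nra.
Qed.

End Subdifferential.

Lemma le_add_of_sq_le (D a b : R) :
  0 <= D -> 0 <= a -> 0 <= b -> D * D <= a * a + b * D -> D <= a + b.
Proof. intros. nra. Qed.

Lemma le_add_of_sq_le_mul (Z E c : R) :
  0 <= Z -> 0 <= E -> 0 <= c -> Z * Z <= E * Z + (E + Z) * c -> Z <= E + 2 * c.
Proof. intros. nra. Qed.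

Section ProxNearSubgradient.
Context {X : HilbertSpace} (f : X -> R) (u zeta : X) (t : R) (x : X).
Hypothesis f_convex : convex_fun f.
Hypothesis zeta_subgrad : subdiff f u zeta.
Hypothesis t_pos : 0 < t.
Hypothesis t_le_1 : t <= 1.

Let w : X := hadd (hscal t (hadd u zeta)) (hscal (1 - t) u).
Let Z : R := hnorm zeta.
Let K : R := f (hadd u zeta) - f u.
Let C : R := K + 2 * Z + 1.
Let D : R := hnorm (hsub x w).

Hypothesis x_prox : prox_point f (/ (2 * (t * t * t))) w x.

Lemma hnorm_sq_le_increment : Z * Z <= K.
Proof.
  pose proof (zeta_subgrad (hadd u zeta)) as H.
  assert (E : hinner zeta (hsub (hadd u zeta) u) = hsqnorm zeta) by (inner_expand; ring).
  unfold Z, K. rewrite hnorm_sq. lra.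
Qed.

Lemma hinner_sub_shift (a : X) :
  hinner a (hsub x u) = hinner a (hsub x w) + t * hinner a zeta.
Proof. unfold w. inner_expand. ring. Qed.

Lemma prox_lower_bound : f u - Z * D + t * (Z * Z) <= f x.
Proof.
  pose proof (zeta_subgrad x) as H. rewrite hinner_sub_shift in H.
  pose proof (hinner_ge_hnorm zeta (hsub x w)).
  assert (H1 : hinner zeta zeta = Z * Z) by (unfold Z; now rewrite hnorm_sq).
  fold Z D in H0. rewrite H1 in H. lra.
Qed.

Lemma prox_upper_bound : f x + / (2 * (t * t * t)) * (D * D) <= f u + t * K.
Proof.
  pose proof (x_prox w) as H.
  assert (E : hsqnorm (hsub w w) = 0) by (inner_expand; ring).
  rewrite E, Rmult_0_r, Rplus_0_r, <- hnorm_sq in H. fold D in H.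
  assert (f w <= t * f (hadd u zeta) + (1 - t) * f u) by (apply f_convex; lra).
  unfold K. lra.
Qed.

Lemma prox_dist_le : D <= C * (t * t).
Proof.
  assert (ht3 : 0 < t * t * t) by (repeat apply Rmult_lt_0_compat; lra).
  pose proof hnorm_sq_le_increment. pose proof prox_lower_bound. pose proof prox_upper_bound.
  assert (HZ : 0 <= Z) by apply hnorm_nonneg.
  assert (HD : 0 <= D) by apply hnorm_nonneg.
  assert (Hsq : D * D <= 2 * (t * t * t) * (t * K + Z * D)).
  { replace (D * D) with (2 * (t * t * t) * (/ (2 * (t * t * t)) * (D * D))) by (field; lra).
    apply Rmult_le_compat_l; nra. }
  apply (Rle_trans _ ((t * t) * (K + 1) + 2 * (t * t * t) * Z)).
  - apply le_add_of_sq_le; nra.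
  - assert (t * (t * t * Z) <= 1 * (t * t * Z)) by (apply Rmult_le_compat_r; nra).
    unfold C. nra.
Qed.

Lemma prox_value_close : Rabs (f x - f u) <= t * (K + Z * C).
Proof.
  pose proof hnorm_sq_le_increment. pose proof prox_lower_bound. pose proof prox_upper_bound.
  pose proof prox_dist_le.
  assert (HZ : 0 <= Z) by apply hnorm_nonneg.
  assert (HD : 0 <= D) by apply hnorm_nonneg.
  assert (ht3 : 0 < t * t * t) by (repeat apply Rmult_lt_0_compat; lra).
  assert (0 <= / (2 * (t * t * t)) * (D * D))
    by (apply Rmult_le_pos; [apply Rlt_le, Rinv_0_lt_compat |]; nra).
  assert (HC : 0 <= C) by (unfold C; nra).
  assert (Z * D <= Z * (C * (t * t))) by (apply Rmult_le_compat_l; lra).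
  assert (Z * C * (t * t) <= Z * C * (t * 1))
    by (apply Rmult_le_compat_l; [apply Rmult_le_pos | apply Rmult_le_compat_l]; lra).
  apply Rabs_le. split; nra.
Qed.

Lemma prox_subgrad_hnorm_lower (eta : X) :
  subdiff f x eta -> Z <= hnorm eta + 2 * (C * t).
Proof.
  intros Heta.
  pose proof (subdiff_monotone f u x zeta eta zeta_subgrad Heta) as Hmon.
  rewrite !hinner_sub_shift in Hmon.
  pose proof (hinner_ge_hnorm zeta (hsub x w)) as H1.
  pose proof (hinner_le_hnorm eta (hsub x w)) as H2.
  pose proof (hinner_le_hnorm eta zeta) as H3.
  pose proof prox_dist_le.
  assert (HZ : 0 <= Z) by apply hnorm_nonneg.
  assert (HE : 0 <= hnorm eta) by apply hnorm_nonneg.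
  assert (HZZ : hinner zeta zeta = Z * Z) by (unfold Z; now rewrite hnorm_sq).
  rewrite HZZ in Hmon.
  fold Z D in H1. fold D in H2. fold Z in H3.
  apply le_add_of_sq_le_mul; try assumption.
  - unfold C. pose proof hnorm_sq_le_increment. nra.
  - apply (Rmult_le_reg_l t); [lra |].
    assert ((hnorm eta + Z) * D <= (hnorm eta + Z) * (C * (t * t))) by nra.
    nra.
Qed.

End ProxNearSubgradient.

Lemma exists_small_scale (A B d e : R) :
  0 <= A -> 0 <= B -> 0 < d -> 0 < e -> exists t, 0 < t <= 1 /\ t * A < d /\ t * B < e.
Proof.
  intros HA HB hd he.
  assert (hdA : 0 < d / (A + 1)) by (apply Rdiv_lt_0_compat; lra).
  assert (heB : 0 < e / (B + 1)) by (apply Rdiv_lt_0_compat; lra).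
  destruct (eventually_witness _ (eventually_and _ _ (eventually_inv_INR_S_lt _ hdA)
              (eventually_inv_INR_S_lt _ heB))) as [n [Hd He]].
  pose proof (inv_INR_S_pos n). pose proof (inv_INR_S_le_1 n).
  exists (/ INR (S n)). split; [lra |].
  apply (Rmult_lt_compat_r (A + 1)) in Hd; [| lra].
  apply (Rmult_lt_compat_r (B + 1)) in He; [| lra].
  replace (d / (A + 1) * (A + 1)) with d in Hd by (field; lra).
  replace (e / (B + 1) * (B + 1)) with e in He by (field; lra).
  split; nra.
Qed.

Lemma min_norm_subgrad_near {X : HilbertSpace} (f : X -> R) (lb : R) (u zeta : X) :
  (forall y, lb <= f y) -> convex_fun f -> lsc_fun f -> subdiff f u zeta ->
  forall eps delta, 0 < eps -> 0 < delta ->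
  exists x z0, min_norm_subgrad f x z0 /\ Rabs (f x - f u) < delta /\
               hnorm zeta <= hnorm z0 + eps.
Proof.
  intros Hlb Hconv Hlsc Hzeta eps delta heps hdelta.
  set (Z := hnorm zeta). set (K := f (hadd u zeta) - f u). set (C := K + 2 * Z + 1).
  assert (HZ : 0 <= Z) by apply hnorm_nonneg.
  assert (HK : Z * Z <= K) by (apply (hnorm_sq_le_increment f u zeta Hzeta)).
  destruct (exists_small_scale (K + Z * C) (2 * C) delta eps) as [t [Ht [Htd Hte]]];
    try (unfold C; nra); try lra.
  assert (hk : 0 < / (2 * (t * t * t))).
  { apply Rinv_0_lt_compat. assert (0 < t * t * t) by (repeat apply Rmult_lt_0_compat; lra). lra. }
  destruct (prox_point_exists f Hconv lb _ (hadd (hscal t (hadd u zeta)) (hscal (1 - t) u))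
              hk Hlb Hlsc) as [x Hx].
  destruct (min_norm_subgrad_exists f x _ (prox_point_subdiff f Hconv _ _ _ hk Hx)) as [z0 Hz0].
  exists x, z0. split; [exact Hz0 |]. split.
  - pose proof (prox_value_close f u zeta t x Hconv Hzeta (proj1 Ht) (proj2 Ht) Hx) as Hclose.
    fold Z K in Hclose. fold C in Hclose. lra.
  - pose proof (prox_subgrad_hnorm_lower f u zeta t x Hconv Hzeta (proj1 Ht) (proj2 Ht) Hx z0
                  (proj1 Hz0)) as Hlower.
    fold Z K in Hlower. fold C in Hlower. lra.
Qed.

Theorem mainTheorem5 (X : HilbertSpace) (betahat : X -> R) (Psi : R -> R)
  (hbeta_nonneg : forall u, 0 <= betahat u)
  (hbeta_convex : convex_fun betahat)
  (hbeta_lsc : lsc_fun betahat)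
  (hPsi_nonneg : forall t, 0 <= t -> 0 <= Psi t)
  (hPsi_cont : continuous_on_nonneg Psi)
  (hbound : forall (u zeta0 : X), min_norm_subgrad betahat u zeta0 ->
              hnorm zeta0 <= Psi (betahat u)) :
  forall (u zeta : X), subdiff betahat u zeta -> hnorm zeta <= Psi (betahat u).
Proof.
  intros u zeta Hzeta.
  apply Rle_of_forall_lt_plus. intros e he.
  destruct (hPsi_cont (betahat u) (hbeta_nonneg u) (e / 2) ltac:(lra)) as [d [hd Hd]].
  destruct (min_norm_subgrad_near betahat 0 u zeta hbeta_nonneg hbeta_convex hbeta_lsc Hzeta
              (e / 2) d ltac:(lra) hd) as [x [z0 [Hz0 [Hx Hz]]]].
  pose proof (hbound x z0 Hz0).
  pose proof (Hd (betahat x) (hbeta_nonneg x) Hx) as HPsi.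
  apply Rabs_def2 in HPsi. lra.
Qed.
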